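(* For any matroid $L$ on a finite set $U$ and any $S\subseteq U$, the identity map on $U$ is a rank-preserving weak map $L|S\mathbin{\Box} L/S\rightarrow L$; that is, every independent set of $L$ is independent in $L|S\mathbin{\Box} L/S$, and the two matroids have the same rank.
   Context: For a matroid $M$ on $S$ write $\rho_M$ for rank, $\rho(M)=\rho_M(S)$, $\nu_M(A)=|A|-\rho_M(A)$, $\lambda_M(A)=\rho(M)-\rho_M(A)$. For matroids $M$ on $S$ and $N$ on $T$ with $S\cap T=\emptyset$, the free product $M\mathbin{\Box} N$ is the matroid on $S\cup T$ whose independent sets are those $A$ with $A\cap S$ independent in $M$ and $\lambda_M(A\cap S)\geq\nu_N(A\cap T)$. $L|S$ is the restriction to $S$ and $L/S$ the contraction of $S$ (on $U\setminus S$). The identity map is a weak map $L_1\to L_2$ between matroids on the same set if every independent set of $L_2$ is independent in $L_1$. *)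

From mathcomp Require Import all_boot.
Set Implicit Arguments. Unset Strict Implicit. Unset Printing Implicit Defensive.

Definition is_matroid (T : finType) (E : {set T}) (I : pred {set T}) : Prop :=
  [/\ forall A : {set T}, I A -> A \subset E,
      I set0,
      forall A B : {set T}, I B -> A \subset B -> I A &
      forall A B : {set T}, I A -> I B -> #|A| < #|B| ->
        exists2 x, x \in B :\: A & I (x |: A)].

Definition mrank (T : finType) (I : pred {set T}) (A : {set T}) : nat :=
  \max_(B : {set T} | (B \subset A) && I B) #|B|.

Definition restr_indep (T : finType) (I : pred {set T}) (S : {set T})
  : pred {set T} := fun A => (A \subset S) && I A.

Definition contr_indep (T : finType) (U : {set T}) (I : pred {set T})
  (S : {set T}) : pred {set T} :=
  fun A => (A \subset U :\: S) && (mrank I (A :|: S) == #|A| + mrank I S).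

(* free product M [] N, M on E1 with independent sets I1, N on E2 with I2:
   A independent iff A n E1 indep in M and lambda_M(A n E1) >= nu_N(A n E2),
   where lambda_M(X) = rho(M) - rho_M(X), nu_N(Y) = |Y| - rho_N(Y). *)
Definition freeprod_indep (T : finType) (E1 : {set T}) (I1 : pred {set T})
  (E2 : {set T}) (I2 : pred {set T}) : pred {set T} :=
  fun A => [&& A \subset E1 :|: E2, I1 (A :&: E1) &
     mrank I1 E1 - mrank I1 (A :&: E1) >= #|A :&: E2| - mrank I2 (A :&: E2)].

(* Write A' = A :\: S.  Given an independent set A of L, extend A :&: S to a
   basis of S and then, inside A :|: S, to an independent set J with
   #|A| <= #|J|; since J :&: S is a basis of S, J :\: S is independent in L/S,
   which gives #|A| <= rho(S) + rho_{L/S}(A'), i.e. the free-product inequality.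
   Conversely every independent set of the free product has at most
   rho(S) + rho_{L/S}(A') <= rho(L) elements, because an L/S-independent set
   B satisfies rho(B :|: S) = #|B| + rho(S). *)

From mathcomp Require Import all_boot.
From mathcomp Require Import zify.

Set Implicit Arguments.
Unset Strict Implicit.

Section Rank.
Variables (T : finType) (I : pred {set T}).
Implicit Types A B S X Y : {set T}.

Lemma leq_mrank A B : B \subset A -> I B -> #|B| <= mrank I A.
Proof.
by move=> sBA iB; apply: (leq_bigmax_cond (F := fun B => #|B|)); rewrite sBA.
Qed.

Lemma mrank_leq A n :
  (forall B, B \subset A -> I B -> #|B| <= n) -> mrank I A <= n.
Proof. by move=> le_n; apply/bigmax_leqP => B /andP[]; apply: le_n. Qed.

Lemma mrank_basis A : I set0 -> exists B, [/\ B \subset A, I B & #|B| = mrank I A].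
Proof.
move=> I0; have : 0 < #|[pred B : {set T} | (B \subset A) && I B]|.
  by apply/card_gt0P; exists set0; rewrite inE sub0set.
case/(eq_bigmax_cond (fun B : {set T} => #|B|)) => B.
by rewrite inE => /andP[sBA iB] eqB; exists B.
Qed.

Lemma mrank_indep X : I X -> mrank I X = #|X|.
Proof.
move=> iX; apply/eqP; rewrite eqn_leq leq_mrank // andbT.
by apply: mrank_leq => B sBX _; apply: subset_leq_card.
Qed.

Lemma mrankS X Y : X \subset Y -> mrank I X <= mrank I Y.
Proof.
by move=> sXY; apply: mrank_leq => B sBX; apply: leq_mrank (subset_trans sBX sXY).
Qed.

Lemma mrank_restr S X : X \subset S -> mrank (restr_indep I S) X = mrank I X.
Proof.
move=> sXS; apply: eq_bigl => B; rewrite /restr_indep.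
by case sBX: (B \subset X); rewrite ?(subset_trans sBX sXS).
Qed.

End Rank.

Section FreeProduct.
Variables (T : finType) (E1 E2 : {set T}) (I1 I2 : pred {set T}).

(* Since A :&: E1 is independent, lambda(A :&: E1) is a genuine difference
   and the defining inequality can be rearranged without truncation. *)
Lemma freeprod_indepE (A : {set T}) :
  A \subset E1 :|: E2 -> [disjoint E1 & E2] -> I1 (A :&: E1) ->
  freeprod_indep E1 I1 E2 I2 A = (#|A| <= mrank I1 E1 + mrank I2 (A :&: E2)).
Proof.
move=> sAE dE12 iA1; rewrite /freeprod_indep sAE iA1 (mrank_indep iA1) /=.
have le_A1 : #|A :&: E1| <= mrank I1 E1 by apply: leq_mrank (subsetIr _ _) iA1.
have -> : #|A| = #|A :&: E1| + #|A :&: E2|.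
  suff -> : A :&: E2 = A :\: E1 by rewrite cardsID.
  apply/setP => x; rewrite !inE.
  case xA: (x \in A); rewrite ?andbF //=.
  have /setUP[xE1 | xE2] := subsetP sAE x xA.
    by rewrite xE1 (disjointFr dE12 xE1).
  by rewrite xE2 (disjointFl dE12 xE2).
apply/idP/idP => ?; lia.
Qed.

End FreeProduct.

Section Matroid.
Variables (T : finType) (U : {set T}) (I : pred {set T}).
Hypothesis matI : is_matroid U I.
Implicit Types A B J S X Y : {set T}.

Lemma indep_ground A : I A -> A \subset U.
Proof. by case: matI => sub _ _ _; apply: sub. Qed.

Lemma indep0 : I set0.
Proof. by case: matI. Qed.

Lemma indepS A B : B \subset A -> I A -> I B.
Proof. by case: matI => _ _ down _ sBA iA; apply: down iA sBA. Qed.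

Lemma indep_extend X Y : I X -> I Y ->
  exists J, [/\ I J, X \subset J, J \subset X :|: Y & #|Y| <= #|J|].
Proof.
case: matI => _ _ _ aug iX iY.
move: {2}(#|Y| - #|X|) (leqnn (#|Y| - #|X|)) => k.
elim: k X iX => [|k IHk] X iX le_k.
  by exists X; split; rewrite ?subsetUl //; lia.
have [le_YX | ltXY] := leqP #|Y| #|X|; first by exists X; rewrite subsetUl.
have [x /setDP[xY xNX] ixX] := aug X Y iX iY ltXY.
have [|J [iJ sxXJ sJ leYJ]] := IHk (x |: X) ixX; first by rewrite cardsU1 xNX; lia.
exists J; split => //; first exact: subset_trans (subsetUr _ _) sxXJ.
by apply: subset_trans sJ _; rewrite !subUset sub1set inE xY orbT subsetUl subsetUr.
Qed.

Lemma mrank_setU_le X Y : mrank I (X :|: Y) <= #|X| + mrank I Y.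
Proof.
apply: mrank_leq => B sBXY iB; rewrite -(cardsID Y B).
have le_BY : #|B :&: Y| <= mrank I Y.
  exact: leq_mrank (subsetIr _ _) (indepS (subsetIl _ _) iB).
suff : #|B :\: Y| <= #|X| by lia.
apply: subset_leq_card; apply/subsetP => x /setDP[xB xNY].
by move: (subsetP sBXY x xB); rewrite inE (negbTE xNY) orbF.
Qed.

Lemma contr_indep_setD S J :
  I J -> mrank I S <= #|J :&: S| -> contr_indep U I S (J :\: S).
Proof.
move=> iJ le_S_JS; rewrite /contr_indep setSD ?indep_ground //=.
rewrite eqn_leq mrank_setU_le /=.
have le_J : #|J| <= mrank I (J :\: S :|: S).
  apply: leq_mrank iJ; apply/subsetP => x xJ.
  by rewrite !inE xJ andbT orNb.
have := cardsID S J; lia.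
Qed.

Lemma card_le_mrank_contr S A :
  I A -> #|A| <= mrank I S + mrank (contr_indep U I S) (A :\: S).
Proof.
move=> iA; have [Y [sYS iY eqY]] := mrank_basis S indep0.
have iAS : I (A :&: S) := indepS (subsetIl _ _) iA.
have [BS [iBS _ sBS le_Y_BS]] := indep_extend iAS iY.
have sBS_S : BS \subset S by rewrite (subset_trans sBS) // subUset subsetIr.
have [J [iJ sBS_J sJ le_A_J]] := indep_extend iBS iA.
have le_BS_JS : #|BS| <= #|J :&: S| by apply/subset_leq_card/subsetIP.
have le_JS_S : #|J :&: S| <= mrank I S.
  exact: leq_mrank (subsetIr _ _) (indepS (subsetIl _ _) iJ).
have le_JmS : #|J :\: S| <= mrank (contr_indep U I S) (A :\: S).
  apply: leq_mrank; last by apply: contr_indep_setD; lia.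
  have sJ_SA : J \subset S :|: A by rewrite (subset_trans sJ) ?setSU.
  by rewrite (subset_trans (setSD S sJ_SA)) // setDUl setDv set0U.
have := cardsID S J; lia.
Qed.

Lemma mrank_contr_le S X :
  S \subset U -> mrank I S + mrank (contr_indep U I S) X <= mrank I U.
Proof.
move=> sSU; have contr0 : contr_indep U I S set0.
  by rewrite /contr_indep /= sub0set set0U cards0 add0n eqxx.
have [B [_ /andP[sB /eqP eqB] <-]] := mrank_basis X contr0.
rewrite addnC -eqB; apply: mrankS.
by rewrite subUset sSU (subset_trans sB) ?subsetDl.
Qed.

End Matroid.

Theorem proposition4p2 (T : finType) (U : {set T}) (I : pred {set T})
  (S : {set T}) :
  is_matroid U I -> S \subset U ->
  (forall A : {set T}, I A ->
     freeprod_indep S (restr_indep I S) (U :\: S) (contr_indep U I S) A) /\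
  mrank (freeprod_indep S (restr_indep I S) (U :\: S) (contr_indep U I S))
        (S :|: (U :\: S)) = mrank I U.
Proof.
move=> matI sSU.
have eU : S :|: (U :\: S) = U by rewrite -{1}(setIidPr sSU) setID.
have dS : [disjoint S & U :\: S] by rewrite -setI_eq0 setIDA setDIl setDv set0I.
have freeE (A : {set T}) : A \subset U -> I (A :&: S) ->
    freeprod_indep S (restr_indep I S) (U :\: S) (contr_indep U I S) A =
    (#|A| <= mrank I S + mrank (contr_indep U I S) (A :\: S)).
  move=> sAU iAS; rewrite freeprod_indepE ?eU ?(mrank_restr I (subxx S)) //.
    by rewrite setIDA (setIidPl sAU).
  by rewrite /restr_indep subsetIr.
have indep_free (A : {set T}) : I A ->
    freeprod_indep S (restr_indep I S) (U :\: S) (contr_indep U I S) A.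
  move=> iA; rewrite freeE ?(indep_ground matI iA) ?(indepS matI (subsetIl _ _) iA) //.
  exact: card_le_mrank_contr.
split=> //; apply/eqP; rewrite eqn_leq; apply/andP; split.
  apply: mrank_leq => A; rewrite eU => sAU freeA.
  have iAS : I (A :&: S) by case/and3P: freeA => _ /andP[].
  by move: freeA; rewrite freeE // => /leq_trans; apply; apply: mrank_contr_le.
have [B [_ iB <-]] := mrank_basis U (indep0 matI).
by apply: leq_mrank (indep_free _ iB); rewrite eU (indep_ground matI iB).
Qed.
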